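(* Let $S$ be an optimal $n$-town. Then the centers of all rows of $S$ of odd cardinality lie on a common vertical grid line $V_o$ (a line $x=a$ with $a\in\mathbb{Z}$), and the centers of all rows of $S$ of even cardinality lie on a common vertical line $V_e$ at distance $\frac12$ from $V_o$. Similarly, the centers of all columns of odd cardinality lie on a common horizontal grid line $H_o$, and the centers of all columns of even cardinality lie on a common horizontal line $H_e$ at distance $\frac12$ from $H_o$. Moreover, without changing its cost, $S$ can be moved by a translation and a rotation by a multiple of $90^\circ$ so that $H_o$ becomes the $x$-axis, $V_o$ becomes the $y$-axis, and $H_e$ and $V_e$ lie in the negative half-planes (i.e., $H_e$ is the line $y=-\frac12$ and $V_e$ is the line $x=-\frac12$).
   Context: An $n$-town is a set $S\subset\mathbb{Z}\times\mathbb{Z}$ of exactly $n$ distinct grid points; its cost is $c(S)=\frac12\sum_{s\in S}\sum_{t\in S}\|s-t\|_1$ (Manhattan distance), and it is optimal if its cost is minimum among all $n$-towns. For $i\in\mathbb{Z}$, the $i$-th column of $S$ is $C_i=\{(i,y)\in S: y\in\mathbb{Z}\}$ and the $i$-th row is $R_i=\{(x,i)\in S: x\in\mathbb{Z}\}$. The length of a row or column is its cardinality. The center of a nonempty row is the point midway between its leftmost and rightmost points; the center of a nonempty column is the point midway between its lowest and highest points. *)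

From mathcomp Require Import all_boot all_order all_algebra.
Set Implicit Arguments. Unset Strict Implicit. Unset Printing Implicit Defensive.
Import Order.TTheory GRing.Theory Num.Theory.
Local Open Scope ring_scope.

(* Grid points are pairs of integers; a finite set of grid points is
   represented by a duplicate-free sequence. *)
Definition point := (int * int)%type.

Definition is_town (n : nat) (S : seq point) : Prop :=
  uniq S /\ size S = n.

Definition l1dist (s t : point) : int := `|s.1 - t.1| + `|s.2 - t.2|.

Definition cost (S : seq point) : rat :=
  ((\sum_(s <- S) \sum_(t <- S) l1dist s t)%:~R) / 2.

Definition optimal (n : nat) (S : seq point) : Prop :=
  is_town n S /\ forall T, is_town n T -> cost S <= cost T.

Definition tcol (S : seq point) (i : int) : seq point :=
  [seq p <- S | p.1 == i].
Definition trow (S : seq point) (i : int) : seq point :=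
  [seq p <- S | p.2 == i].

Definition seq_min (xs : seq int) : int := foldr Num.min (head 0 xs) xs.
Definition seq_max (xs : seq int) : int := foldr Num.max (head 0 xs) xs.

Definition row_center (S : seq point) (i : int) : rat * rat :=
  let xs := map fst (trow S i) in
  (((seq_min xs + seq_max xs)%:~R) / 2, i%:~R).

Definition column_center (S : seq point) (i : int) : rat * rat :=
  let ys := map snd (tcol S i) in
  (i%:~R, ((seq_min ys + seq_max ys)%:~R) / 2).

Definition rot90 (p : point) : point := (- p.2, p.1).

Definition rigid (k : nat) (a b : int) (p : point) : point :=
  let q := iter k rot90 p in (q.1 + a, q.2 + b).

(* Along a line, the sum of the pairwise distances between a set of p integers
   and a set of q integers is at least that between two concentric segments of
   lengths p and q, and strictly more if both sets are segments whose centers are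
   at distance at least 1.  The cost of a town is a sum over pairs of rows of this
   horizontal quantity plus a vertical part depending only on the row lengths, so
   replacing every row by a centered segment does not increase it.  In an optimal
   town every pair of rows is therefore extremal: each row is a segment, and any
   two row centers are less than 1 apart.  A center lies on Z or on Z + 1/2
   according to the parity of the row length, so odd rows share one integer center
   a and even rows share the center a + 1/2 or a - 1/2.  Columns follow by
   exchanging the coordinates, and a rotation by a multiple of 90 degrees followed
   by a translation brings both half-integer lines to -1/2. *)

From mathcomp Require Import all_boot all_order all_algebra.
From mathcomp Require Import zify ring.
Import Order.TTheory GRing.Theory Num.Theory.
Set Implicit Arguments.
Unset Strict Implicit.
Unset Printing Implicit Defensive.

Local Open Scope ring_scope.

Lemma sumr_const_seq (T : Type) (r : seq T) (c : int) :
  \sum_(x <- r) c = (size r)%:Z * c.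
Proof.
elim: r => [|x r IH]; first by rewrite big_nil mul0r.
by rewrite big_cons IH /= -addn1 PoszD mulrDl mul1r addrC.
Qed.

Lemma ler_sum_const_seq (r : seq int) (F : int -> int) (c : int) :
  {in r, forall y : int, c <= F y} -> (size r)%:Z * c <= \sum_(y <- r) F y.
Proof.
by move=> hF; rewrite -sumr_const_seq big_seq [leRHS]big_seq; apply: ler_sum.
Qed.

Lemma sum_const_seq_in (r : seq int) (F : int -> int) (c : int) :
  {in r, forall y : int, F y = c} -> \sum_(y <- r) F y = (size r)%:Z * c.
Proof. by move=> hF; rewrite -sumr_const_seq; apply: eq_big_seq. Qed.

Lemma ler_sum_const_seq_add (r : seq int) (F : int -> int) (c d y0 : int) :
  {in r, forall y : int, c <= F y} -> y0 \in r -> c + d <= F y0 ->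
  (size r)%:Z * c + d <= \sum_(y <- r) F y.
Proof.
move=> hF /perm_to_rem hr hy0; rewrite (perm_big _ hr) (perm_size hr) big_cons.
have := @ler_sum_const_seq (rem y0 r) F c (fun y hy => hF y (mem_rem hy)).
by rewrite /= -addn1 PoszD mulrDl mul1r -addrA addrC; apply: lerD.
Qed.

Definition dsum (X Y : seq int) : int := \sum_(x <- X) \sum_(y <- Y) `|x - y|.

Definition iseg (l : int) (p : nat) : seq int := [seq l + j%:Z | j <- iota 0 p].

(* The segment of length [p] centered at [0] for odd [p] and at [-1/2] for even [p]. *)
Definition cseg (p : nat) : seq int := iseg (- (p./2)%:Z) p.

Definition dmin (p q : nat) : int := dsum (cseg p) (cseg q).

Lemma perm_dsum X X' Y Y' : perm_eq X X' -> perm_eq Y Y' -> dsum X Y = dsum X' Y'.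
Proof.
move=> pX pY; rewrite /dsum (perm_big _ pX); apply: eq_bigr => x _.
exact: perm_big.
Qed.

Lemma dsumC X Y : dsum X Y = dsum Y X.
Proof.
rewrite /dsum exchange_big; apply: eq_bigr => y _; apply: eq_bigr => x _.
exact: distrC.
Qed.

Lemma dsum_ge0 X Y : 0 <= dsum X Y.
Proof. by apply: sumr_ge0 => x _; apply: sumr_ge0 => y _. Qed.

Lemma dsum_cons2 a b X Y :
  dsum (a :: b :: X) Y = \sum_(y <- Y) (`|a - y| + `|b - y|) + dsum X Y.
Proof. by rewrite /dsum !big_cons big_split /= addrA. Qed.

Lemma dminC p q : dmin p q = dmin q p.
Proof. exact: dsumC. Qed.

Lemma size_iseg l p : size (iseg l p) = p.
Proof. by rewrite size_map size_iota. Qed.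

Lemma mem_iseg l p x : (x \in iseg l p) = (l <= x < l + p%:Z).
Proof.
apply/mapP/idP => [[j]|/andP [h1 h2]].
  by rewrite mem_iota => /andP [_ hj] ->; lia.
by exists `|x - l|%N; rewrite ?mem_iota; lia.
Qed.

Lemma iseg_uniq l p : uniq (iseg l p).
Proof. by rewrite map_inj_uniq ?iota_uniq // => a b /addrI []. Qed.

Lemma perm_iseg_ends l p : (2 <= p)%N ->
  perm_eq (iseg l p) (l :: l + (p%:Z - 1) :: iseg (l + 1) (p - 2)).
Proof.
move=> hp; apply: uniq_perm; first exact: iseg_uniq.
  by rewrite /= iseg_uniq !(inE, mem_iseg) andbT; lia.
by move=> x; rewrite !(inE, mem_iseg); lia.
Qed.

Lemma foldr_minP (z : int) xs :
  foldr Num.min z xs \in z :: xs /\ {in z :: xs, forall x : int, foldr Num.min z xs <= x}.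
Proof.
elim: xs => [|y xs [IH1 IH2]] /=.
  by split=> [|x]; rewrite ?mem_head // inE => /eqP ->.
split=> [|x].
  case: leP => _; rewrite !inE ?eqxx ?orbT //.
  by move: IH1; rewrite inE => /orP [] ->; rewrite ?orbT.
rewrite ge_min !inE => /or3P [/eqP->|/eqP->|hx]; first by rewrite IH2 ?orbT ?mem_head.
  by rewrite lexx.
by rewrite IH2 ?orbT // inE hx orbT.
Qed.

Lemma foldr_maxP (z : int) xs :
  foldr Num.max z xs \in z :: xs /\ {in z :: xs, forall x : int, x <= foldr Num.max z xs}.
Proof.
elim: xs => [|y xs [IH1 IH2]] /=.
  by split=> [|x]; rewrite ?mem_head // inE => /eqP ->.
split=> [|x].
  case: leP => _; rewrite !inE ?eqxx ?orbT //.
  by move: IH1; rewrite inE => /orP [] ->; rewrite ?orbT.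
rewrite le_max !inE => /or3P [/eqP->|/eqP->|hx]; first by rewrite IH2 ?orbT ?mem_head.
  by rewrite lexx.
by rewrite IH2 ?orbT // inE hx orbT.
Qed.

Lemma seq_minP (xs : seq int) : xs != [::] ->
  seq_min xs \in xs /\ {in xs, forall x : int, seq_min xs <= x}.
Proof.
case: xs => [|y ys] // _; have [h1 h2] := foldr_minP y (y :: ys).
have -> : seq_min (y :: ys) = foldr Num.min y (y :: ys) by [].
split=> [|x hx]; last by apply: h2; rewrite inE hx orbT.
by move: h1; rewrite inE => /orP [/eqP ->|//]; apply: mem_head.
Qed.

Lemma seq_maxP (xs : seq int) : xs != [::] ->
  seq_max xs \in xs /\ {in xs, forall x : int, x <= seq_max xs}.
Proof.
case: xs => [|y ys] // _; have [h1 h2] := foldr_maxP y (y :: ys).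
have -> : seq_max (y :: ys) = foldr Num.max y (y :: ys) by [].
split=> [|x hx]; last by apply: h2; rewrite inE hx orbT.
by move: h1; rewrite inE => /orP [/eqP ->|//]; apply: mem_head.
Qed.

Lemma seq_min_eq (xs : seq int) m : m \in xs -> {in xs, forall x : int, m <= x} ->
  seq_min xs = m.
Proof.
move=> hm hle; have hne : xs != [::] by case: (xs) hm.
have [h1 h2] := seq_minP hne.
by apply/eqP; rewrite eq_le h2 // hle.
Qed.

Lemma seq_max_eq (xs : seq int) m : m \in xs -> {in xs, forall x : int, x <= m} ->
  seq_max xs = m.
Proof.
move=> hm hle; have hne : xs != [::] by case: (xs) hm.
have [h1 h2] := seq_maxP hne.
by apply/eqP; rewrite eq_le h2 // hle.
Qed.

Lemma seq_min_max_iseg (xs : seq int) l p : (0 < p)%N -> perm_eq xs (iseg l p) ->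
  seq_min xs = l /\ seq_max xs = l + p%:Z - 1.
Proof.
move=> hp /perm_mem hm; split.
  by apply: seq_min_eq => [|x]; rewrite hm mem_iseg; lia.
by apply: seq_max_eq => [|x]; rewrite hm mem_iseg; lia.
Qed.

Lemma size_le_seq_range (X : seq int) : uniq X -> X != [::] ->
  (size X)%:Z <= seq_max X - seq_min X + 1.
Proof.
move=> uX hne; have [hmin hle] := seq_minP hne; have [_ hge] := seq_maxP hne.
have := hge _ hmin; have : (size X <= `|(seq_max X - seq_min X + 1)%R|)%N.
  rewrite -[k in (_ <= k)%N](size_iseg (seq_min X)); apply: uniq_leq_size => // x hx.
  rewrite mem_iseg; have := hle x hx; have := hge x hx; have := hge _ hmin; lia.
lia.
Qed.

Lemma perm_seq_ends (X : seq int) : uniq X -> (2 <= size X)%N ->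
  exists2 X', perm_eq X (seq_min X :: seq_max X :: X') & uniq X'.
Proof.
move=> uX hs; have hne : X != [::] by case: (X) hs.
have [hmin _] := seq_minP hne; have [hmax _] := seq_maxP hne.
have hneq : seq_max X != seq_min X.
  by apply/eqP => e; move: (size_le_seq_range uX hne); rewrite e; lia.
exists (rem (seq_max X) (rem (seq_min X) X)); last by do 2 apply: rem_uniq.
apply: perm_trans (perm_to_rem hmin) _; rewrite perm_cons perm_to_rem //.
by rewrite (mem_rem_uniq _ uX) inE hneq.
Qed.

Lemma dmin_small p q : (p <= 1)%N -> (q <= 1)%N -> dmin p q = 0.
Proof.
by case: p q => [|[|p]] [|[|q]] //= _ _; rewrite /dmin /cseg /iseg /dsum /= ?big_cons ?big_nil.
Qed.

(* Peeling off the two ends of the longer segment, each point of the shorter one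
   lies between them. *)
Lemma dmin_rec p q : (q <= p)%N -> (2 <= p)%N ->
  dmin p q = dmin (p - 2) q + q%:Z * (p%:Z - 1).
Proof.
move=> hqp hp; rewrite /dmin /cseg (perm_dsum (perm_iseg_ends _ hp) (perm_refl _)).
rewrite dsum_cons2 addrC; congr (dsum (iseg _ _) _ + _); first lia.
rewrite (@sum_const_seq_in _ _ (p%:Z - 1)) ?size_iseg // => y.
rewrite mem_iseg; have : (q./2 <= p./2)%N by lia.
have : (q - q./2 <= p - p./2)%N by lia.
lia.
Qed.

(* Remove the two extreme points of the longer set: every point of the other set
   is at total distance [seq_max X - seq_min X >= size X - 1] from them. *)
Lemma dmin_le_dsum (X Y : seq int) : uniq X -> uniq Y ->
  dmin (size X) (size Y) <= dsum X Y.
Proof.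
move: {-1}(size X + size Y)%N (leqnn (size X + size Y)) => N.
elim: N X Y => [|N IH] X Y hN uX uY; first by rewrite dmin_small ?dsum_ge0 //; lia.
wlog hYX : X Y hN uX uY / (size Y <= size X)%N.
  move=> H; case: (leqP (size Y) (size X)) => h; first exact: H.
  by rewrite dsumC dminC; apply: H => //; [lia | apply: ltnW].
case: (ltnP (size X) 2) => hX; first by rewrite dmin_small ?dsum_ge0 //; lia.
have hne : X != [::] by case: (X) hX.
have [X' pX uX'] := perm_seq_ends uX hX.
have hsX : size X = (size X').+2 by rewrite (perm_size pX).
rewrite (perm_dsum pX (perm_refl Y)) dsum_cons2 (dmin_rec hYX hX) addrC.
apply: lerD; last by rewrite hsX subn2; apply: IH => //; lia.
have hr := size_le_seq_range uX hne.
have [[_ hle] [_ hge]] := (seq_minP hne, seq_maxP hne).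
apply: le_trans (ler_sum_const_seq (c := seq_max X - seq_min X) _) => [|y _]; last lia.
by apply: ler_wpM2l => //; lia.
Qed.

Lemma perm_iseg_of_dsum_le (X : seq int) : uniq X -> X != [::] ->
  dsum X X <= dmin (size X) (size X) -> perm_eq X (iseg (seq_min X) (size X)).
Proof.
move=> uX hne hD; have [hmin hle] := seq_minP hne; have [hmax hge] := seq_maxP hne.
suff hr : seq_max X - seq_min X + 1 <= (size X)%:Z.
  apply: uniq_perm => //; first exact: iseg_uniq.
  apply: (uniq_min_size uX _ _).2; last by rewrite size_iseg.
  by move=> x hx; rewrite mem_iseg; have := hle x hx; have := hge x hx; lia.
case: (ltnP (size X) 2) => hX.
  have [x ->] : exists x, X = [:: x] by case: (X) hne hX => [|x [|]] //; exists x.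
  by rewrite /seq_max /seq_min /= maxxx minxx; lia.
have [X' pX uX'] := perm_seq_ends uX hX.
have hsX : size X = (size X').+2 by rewrite (perm_size pX).
move: hD; rewrite {1}(perm_dsum pX (perm_refl X)) dsum_cons2 (dmin_rec (leqnn _) hX).
rewrite (@sum_const_seq_in _ _ (seq_max X - seq_min X)); last first.
  by move=> y hy; have := hle y hy; have := hge y hy; lia.
have := dmin_le_dsum uX' uX; rewrite hsX subn2 /= => hlb hD.
have : (size X').+2%:Z * (seq_max X - seq_min X) <= (size X').+2%:Z * ((size X').+2%:Z - 1).
  by move: hD hlb; set u := _ * (_ - seq_min X); set v := _ * (_ - 1); lia.
by rewrite ler_pM2l; lia.
Qed.

(* [2 * l + p - 1] is twice the center of [iseg l p]. *)
Lemma dmin_lt_dsum_iseg (p q : nat) (l1 l2 : int) : (0 < p)%N -> (0 < q)%N ->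
  2 <= `|(2 * l1 + p%:Z) - (2 * l2 + q%:Z)| -> dmin p q < dsum (iseg l1 p) (iseg l2 q).
Proof.
move: {-1}(p + q)%N (leqnn (p + q)) => N.
elim: N p q l1 l2 => [|N IH] p q l1 l2 hN hp hq hc; first lia.
wlog hqp : p q l1 l2 hN hp hq hc / (q <= p)%N.
  move=> H; case: (leqP q p) => h; first exact: H.
  by rewrite dsumC dminC; apply: H => //; lia.
case: (ltnP p 2) => hp2.
  have [-> ->] : p = 1%N /\ q = 1%N by lia.
  by rewrite dmin_small // /dsum /iseg /= !big_cons !big_nil; lia.
rewrite (perm_dsum (perm_iseg_ends _ hp2) (perm_refl _)) dsum_cons2 (dmin_rec hqp hp2).
have := dmin_le_dsum (iseg_uniq (l1 + 1) (p - 2)) (iseg_uniq l2 q).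
rewrite !size_iseg; set ends := \sum_(y <- _) _; set rest := dsum _ _ => hlb.
have [hin|hout] := boolP ((l1 <= l2) && (l2 + q%:Z <= l1 + p%:Z)).
  have -> : ends = q%:Z * (p%:Z - 1).
    by rewrite /ends (@sum_const_seq_in _ _ (p%:Z - 1)) ?size_iseg // => y; rewrite mem_iseg; lia.
  have := IH (p - 2)%N q (l1 + 1) l2 ltac:(lia) ltac:(lia) hq ltac:(lia).
  by rewrite -/rest; lia.
have : q%:Z * (p%:Z - 1) + 2 <= ends.
  rewrite -{1}(size_iseg l2 q).
  apply: (@ler_sum_const_seq_add _ _ _ _ (if l2 < l1 then l2 else l2 + q%:Z - 1)).
  - by move=> y _; lia.
  - by rewrite mem_iseg; case: ifP; lia.
  - by move: hout; case: ifP; lia.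
lia.
Qed.

Lemma psumr_seq_eq0 (R : numDomainType) (I : eqType) (r : seq I) (F : I -> R) :
  {in r, forall i, 0 <= F i} -> \sum_(i <- r) F i <= 0 -> {in r, forall i, F i = 0}.
Proof.
move=> hF hs i hi; have : \sum_(j <- r | j \in r) F j == 0.
  by rewrite -big_seq eq_le hs big_seq sumr_ge0.
by rewrite psumr_eq0 // => /allP /(_ i hi); rewrite hi => /eqP.
Qed.

Lemma psumr_seq2_eq0 (R : numDomainType) (I : eqType) (r : seq I) (F : I -> I -> R) :
  {in r &, forall i j, 0 <= F i j} -> \sum_(i <- r) \sum_(j <- r) F i j <= 0 ->
  {in r &, forall i j, F i j = 0}.
Proof.
move=> hF hs i j hi hj; have hF1 : {in r, forall i, 0 <= \sum_(j <- r) F i j}.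
  by move=> k hk; rewrite big_seq sumr_ge0 // => l; apply: hF.
apply: (psumr_seq_eq0 (F := F i) (fun k hk => hF i k hi hk) _ hj).
by rewrite (psumr_seq_eq0 hF1 hs hi).
Qed.

Definition row_xs (S : seq point) (i : int) : seq int := map fst (trow S i).
Definition rows (S : seq point) : seq int := undup (map snd S).
Definition tdist (S : seq point) : int := \sum_(s <- S) \sum_(t <- S) l1dist s t.
Definition rowdist (S : seq point) (i j : int) : int :=
  \sum_(s <- trow S i) \sum_(t <- trow S j) l1dist s t.

Lemma big_trow (R : Type) (idx : R) (op : Monoid.com_law idx) (S : seq point)
    (Us : seq int) (F : point -> R) :
  uniq Us -> {in S, forall s, s.2 \in Us} ->
  \big[op/idx]_(s <- S) F s = \big[op/idx]_(i <- Us) \big[op/idx]_(s <- trow S i) F s.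
Proof.
move=> uU hS; under [RHS]eq_bigr => i _ do rewrite /trow big_filter big_mkcond.
rewrite exchange_big /=; apply: eq_big_seq => s hs.
rewrite -big_mkcond -big_filter.
have -> : [seq i <- Us | s.2 == i] = [:: s.2].
  by rewrite -(filter_pred1_uniq uU (hS _ hs)); apply: eq_filter => i; rewrite eq_sym.
by rewrite big_seq1.
Qed.

Lemma tdist_rows (S : seq point) (Us : seq int) : uniq Us -> {in S, forall s, s.2 \in Us} ->
  tdist S = \sum_(i <- Us) \sum_(j <- Us) rowdist S i j.
Proof.
move=> uU hS; rewrite /tdist (big_trow _ _ uU hS); apply: eq_bigr => i _.
by under eq_bigr => s _ do rewrite (big_trow _ _ uU hS); rewrite exchange_big.
Qed.

Lemma mem_trow S i s : (s \in trow S i) = (s \in S) && (s.2 == i).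
Proof. by rewrite mem_filter andbC. Qed.

Lemma rowdistE S i j : rowdist S i j =
  dsum (row_xs S i) (row_xs S j) + ((size (trow S i))%:Z * (size (trow S j))%:Z) * `|i - j|.
Proof.
rewrite /rowdist /dsum /row_xs big_map -mulrA -sumr_const_seq -big_split /=.
apply: eq_big_seq => s; rewrite mem_trow => /andP [_ /eqP hs].
rewrite big_map -sumr_const_seq -big_split /=; apply: eq_big_seq => t.
by rewrite mem_trow => /andP [_ /eqP ht]; rewrite /l1dist hs ht.
Qed.

Lemma row_xs_uniq S i : uniq S -> uniq (row_xs S i).
Proof.
move=> uS; rewrite map_inj_in_uniq ?filter_uniq // => -[x1 y1] [x2 y2].
by rewrite !mem_trow /= => /andP [_ /eqP ->] /andP [_ /eqP ->] /= ->.
Qed.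

Lemma mem_rows S i : (i \in rows S) = (0 < size (trow S i))%N.
Proof.
rewrite mem_undup size_filter -has_count.
by apply/mapP/hasP => [[s hs ->]|[s hs /eqP <-]]; exists s.
Qed.

Lemma rows_uniq S : uniq (rows S).
Proof. exact: undup_uniq. Qed.

Lemma row_in_rows S : {in S, forall s, s.2 \in rows S}.
Proof. by move=> s hs; rewrite mem_undup map_f. Qed.

Lemma size_rows S : size S = (\sum_(i <- rows S) size (trow S i))%N.
Proof.
rewrite -sum1_size (big_trow _ _ (rows_uniq S) (@row_in_rows S)).
by apply: eq_bigr => i _; rewrite sum1_size.
Qed.

Definition crow (p : nat) (i : int) : seq point := [seq (x, i) | x <- cseg p].

Definition centered_town (Us : seq int) (ps : int -> nat) : seq point :=
  flatten [seq crow (ps i) i | i <- Us].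

Lemma centered_town_row Us ps : {in centered_town Us ps, forall s, s.2 \in Us}.
Proof.
elim: Us => [|j Us IH] s //=; rewrite mem_cat inE => /orP [/mapP [x _ ->]|/IH ->].
  by rewrite eqxx.
by rewrite orbT.
Qed.

Lemma centered_town_uniq Us ps : uniq Us -> uniq (centered_town Us ps).
Proof.
elim: Us => [|j Us IH] //= /andP [hj uU]; rewrite cat_uniq IH // andbT.
rewrite map_inj_uniq ?iseg_uniq => [|x y [] //].
apply/hasPn => s /centered_town_row hs; apply/mapP => -[x _ e].
by move: hs; rewrite e /= (negbTE hj).
Qed.

Lemma size_centered_town Us ps : size (centered_town Us ps) = (\sum_(i <- Us) ps i)%N.
Proof.
elim: Us => [|j Us IH]; first by rewrite big_nil.
by rewrite /= size_cat IH big_cons size_map size_iseg.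
Qed.

Lemma trow_centered_town Us ps i : uniq Us -> i \in Us ->
  trow (centered_town Us ps) i = crow (ps i) i.
Proof.
have trow_crow j : trow (crow (ps j) j) i = if j == i then crow (ps j) j else [::].
  rewrite /trow /crow filter_map; case: eqP => [->|ne].
    by congr map; apply/all_filterP/allP => x _ /=.
  by rewrite (@eq_filter _ _ pred0) ?filter_pred0 // => x /=; apply/eqP.
elim: Us => [|j Us IH] // /andP [hj uU] hi.
rewrite /= /trow filter_cat -!/(trow _ i) trow_crow.
case: eqP hi => [<- _|ne]; last first.
  by rewrite inE => /predU1P [e|/(IH uU) ->] //; rewrite e in ne.
rewrite /trow (eq_in_filter (a2 := pred0)) ?filter_pred0 ?cats0 //.
by move=> s /centered_town_row hs /=; apply/eqP => e; rewrite -e hs in hj.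
Qed.

Lemma ler_cost S T : (cost S <= cost T) = (tdist S <= tdist T).
Proof. by rewrite /cost ler_pM2r ?invr_gt0 // ler_int. Qed.

(* Replacing every row by the centered segment of the same length gives an
   [n]-town; it is at least as cheap row pair by row pair, hence equally cheap
   for each pair when [S] is optimal. *)
Lemma optimal_row_dsum n S : optimal n S ->
  {in rows S &, forall i j,
    dsum (row_xs S i) (row_xs S j) = dmin (size (trow S i)) (size (trow S j))}.
Proof.
move=> [[uS sS] hopt]; set ps := fun i => size (trow S i).
set T := centered_town (rows S) ps.
have hT : is_town n T.
  by split; rewrite ?centered_town_uniq ?rows_uniq // size_centered_town -sS size_rows.
have rowT i : i \in rows S -> row_xs T i = cseg (ps i) /\ size (trow T i) = ps i.
  move=> hi; rewrite /row_xs trow_centered_town ?rows_uniq // /crow size_map.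
  by rewrite -map_comp map_id size_iseg.
set g := fun i j => dsum (row_xs S i) (row_xs S j) - dmin (ps i) (ps j).
have hST : tdist S - tdist T = \sum_(i <- rows S) \sum_(j <- rows S) g i j.
  rewrite (tdist_rows (rows_uniq S) (@row_in_rows S)).
  rewrite (tdist_rows (rows_uniq S) (@centered_town_row _ _)) -sumrB.
  apply: eq_big_seq => i hi; rewrite -sumrB; apply: eq_big_seq => j hj.
  rewrite !rowdistE; have [-> ->] := rowT i hi; have [-> ->] := rowT j hj.
  by rewrite /g /dmin /ps; lia.
have hg0 : {in rows S &, forall i j, 0 <= g i j}.
  by move=> i j _ _; rewrite subr_ge0 -[ps i](size_map fst) -[ps j](size_map fst);
    apply: dmin_le_dsum; apply: row_xs_uniq.
move=> i j hi hj; apply/eqP; rewrite -subr_eq0; apply/eqP.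
apply: (psumr_seq2_eq0 hg0 _ hi hj); rewrite -hST subr_le0 -ler_cost.
exact: hopt.
Qed.

Lemma align_centres (I : eqType) (r : seq I) (h : I -> int) (b : I -> bool) :
  {in r &, forall i j, `|(2 * h i - (~~ b i : nat)%:Z) - (2 * h j - (~~ b j : nat)%:Z)| <= 1} ->
  exists a e, (e = 1 \/ e = -1) /\
    {in r, forall i, 2 * h i - (~~ b i : nat)%:Z = if b i then 2 * a else 2 * a + e}.
Proof.
move=> H; have [/hasP [i0 hi0 bi0]|/hasPn nb] := boolP (has b r).
  exists (h i0); have [/hasP [j0 hj0 /= nj0]|/hasPn allb] := boolP (has (predC b) r).
    exists (2 * h j0 - 1 - 2 * h i0); split.
      by have := H i0 j0 hi0 hj0; rewrite bi0 (negbTE nj0) /=; lia.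
    move=> i hi; case: (boolP (b i)) => bi.
      by have := H i i0 hi hi0; rewrite bi bi0 /=; lia.
    by have := H i j0 hi hj0; rewrite (negbTE bi) (negbTE nj0) /=; lia.
  exists 1; split=> [|i hi]; first by left.
  have bi : b i by move: (allb i hi); rewrite /= negbK.
  by have := H i i0 hi hi0; rewrite bi bi0 /=; lia.
case: r H nb => [|j0 r] H nb; first by exists 0, 1; split=> //; left.
have nb0 := nb j0 (mem_head _ _); exists (h j0 - 1), 1; split=> [|i hi]; first by left.
by have := H i j0 hi (mem_head _ _); have := nb i hi; case: (b i) nb0 => //= /negbTE -> _; lia.
Qed.

Lemma intr_half (R : numFieldType) (z a e : int) : z = 2 * a + e ->
  (z%:~R : R) / 2 = a%:~R + e%:~R / 2.
Proof. by move=> ->; rewrite intrD intrM /=; field. Qed.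

Definition rows_aligned (S : seq point) (a : int) (e : rat) : Prop :=
  forall i : int,
    (odd (size (trow S i)) -> (row_center S i).1 = a%:~R) /\
    (~~ odd (size (trow S i)) -> (0 < size (trow S i))%N ->
       (row_center S i).1 = a%:~R + e).

Definition cols_aligned (S : seq point) (b : int) (f : rat) : Prop :=
  forall i : int,
    (odd (size (tcol S i)) -> (column_center S i).2 = b%:~R) /\
    (~~ odd (size (tcol S i)) -> (0 < size (tcol S i))%N ->
       (column_center S i).2 = b%:~R + f).

Lemma optimal_row_iseg n S : optimal n S ->
  {in rows S, forall i, perm_eq (row_xs S i) (iseg (seq_min (row_xs S i)) (size (trow S i)))}.
Proof.
move=> hopt i hi; have [[uS _] _] := hopt.
have hne : row_xs S i != [::] by rewrite -size_eq0 size_map -lt0n -mem_rows.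
rewrite -(size_map fst); apply: perm_iseg_of_dsum_le (row_xs_uniq i uS) hne _.
by rewrite (optimal_row_dsum hopt) // size_map.
Qed.

Lemma optimal_rows_close n S : optimal n S -> {in rows S &, forall i j,
  `|(2 * seq_min (row_xs S i) + (size (trow S i))%:Z) -
    (2 * seq_min (row_xs S j) + (size (trow S j))%:Z)| <= 1}.
Proof.
move=> hopt i j hi hj; rewrite leNgt; apply/negP => hfar.
move: (hi) (hj); rewrite !mem_rows => hpi hpj.
have := dmin_lt_dsum_iseg hpi hpj hfar.
rewrite -(perm_dsum (optimal_row_iseg hopt hi) (optimal_row_iseg hopt hj)).
by rewrite (optimal_row_dsum hopt) // ltxx.
Qed.

Lemma optimal_rows_aligned n S : optimal n S ->
  exists a e, (e = 1/2 \/ e = -(1/2)) /\ rows_aligned S a e.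
Proof.
move=> hopt; set p := fun i => size (trow S i); set l := fun i => seq_min (row_xs S i).
(* For [h = l + p./2], [2 * h - ~~ odd p = 2 * l + p - 1] is twice the row center. *)
have [a [e [he hal]]] : exists a e, (e = 1 \/ e = -1) /\ {in rows S, forall i,
    2 * (l i + ((p i)./2)%:Z) - (~~ odd (p i) : nat)%:Z = if odd (p i) then 2 * a else 2 * a + e}.
  apply: align_centres => i j hi hj; have := optimal_rows_close hopt hi hj.
  rewrite /l /p; have := odd_double_half (size (trow S i)).
  by have := odd_double_half (size (trow S j));
    case: (odd (size (trow S i))); case: (odd (size (trow S j))) => /=; lia.
exists a, (e%:~R / 2); split; first by case: he => ->; [left|right].
move=> i; rewrite -/(p i); have [hi|hi] := boolP (i \in rows S); last first.
  by move: hi; rewrite mem_rows -/(p i) -eqn0Ngt => /eqP ->.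
have hpi : (0 < p i)%N by rewrite -mem_rows.
have [_ hmax] := seq_min_max_iseg hpi (optimal_row_iseg hopt hi).
have := hal i hi; have := odd_double_half (p i).
rewrite /row_center /= -/(row_xs S i) hmax /l /p; case: (odd _) => /= hodd hc.
  by split=> // _; rewrite (@intr_half _ _ a 0) ?mul0r ?addr0 //; lia.
by split=> // _ _; apply: intr_half; lia.
Qed.

Definition swp (p : point) : point := (p.2, p.1).
Definition tr (u v : int) (p : point) : point := (p.1 + u, p.2 + v).

Lemma cost_map (f : point -> point) S :
  (forall s t, l1dist (f s) (f t) = l1dist s t) -> cost (map f S) = cost S.
Proof.
move=> hf; rewrite /cost big_map; congr (_ %:~R / _); apply: eq_bigr => s _.
by rewrite big_map; apply: eq_bigr => t _; rewrite hf.
Qed.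

Lemma town_map (f : point -> point) n S : injective f -> is_town n S -> is_town n (map f S).
Proof. by move=> hf [uS sS]; split; rewrite ?map_inj_uniq ?size_map. Qed.

Lemma optimal_map (f : point -> point) n S : injective f ->
  (forall s t, l1dist (f s) (f t) = l1dist s t) -> optimal n S -> optimal n (map f S).
Proof.
move=> fi hf [tS hS]; split=> [|T hT]; first exact: town_map.
by rewrite cost_map //; apply: le_trans (hS _ (town_map fi hT)) _; rewrite cost_map.
Qed.

Lemma l1dist_swp s t : l1dist (swp s) (swp t) = l1dist s t.
Proof. by rewrite /l1dist addrC. Qed.

Lemma l1dist_rigid k a b s t : l1dist (rigid k a b s) (rigid k a b t) = l1dist s t.
Proof.
have l1dist_rot s' t' : l1dist (rot90 s') (rot90 t') = l1dist s' t'.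
  by rewrite /l1dist /=; lia.
have -> : l1dist s t = l1dist (iter k rot90 s) (iter k rot90 t).
  by elim: k => //= k ->; rewrite l1dist_rot.
by rewrite /rigid /l1dist /=; lia.
Qed.

Lemma swp_inj : injective swp.
Proof. by move=> [x y] [x' y'] [-> ->]. Qed.

Lemma seq_min_mono (f : int -> int) xs : {mono f : x y / x <= y} -> xs != [::] ->
  seq_min (map f xs) = f (seq_min xs).
Proof.
move=> hf hne; have [h1 h2] := seq_minP hne.
by apply: seq_min_eq => [|y /mapP [x hx ->]]; rewrite ?map_f ?hf ?h2.
Qed.

Lemma seq_max_mono (f : int -> int) xs : {mono f : x y / x <= y} -> xs != [::] ->
  seq_max (map f xs) = f (seq_max xs).
Proof.
move=> hf hne; have [h1 h2] := seq_maxP hne.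
by apply: seq_max_eq => [|y /mapP [x hx ->]]; rewrite ?map_f ?hf ?h2.
Qed.

Lemma seq_min_opp xs : xs != [::] -> seq_min [seq - x | x <- xs] = - seq_max xs.
Proof.
move=> hne; have [h1 h2] := seq_maxP hne.
by apply: seq_min_eq => [|y /mapP [x hx ->]]; rewrite ?map_f ?lerN2 ?h2.
Qed.

Lemma seq_max_opp xs : xs != [::] -> seq_max [seq - x | x <- xs] = - seq_min xs.
Proof.
move=> hne; have [h1 h2] := seq_minP hne.
by apply: seq_max_eq => [|y /mapP [x hx ->]]; rewrite ?map_f ?lerN2 ?h2.
Qed.

Lemma trow_swp S i : trow (map swp S) i = map swp (tcol S i).
Proof. by rewrite /trow /tcol filter_map. Qed.

Lemma trow_rot S i : trow (map rot90 S) i = map rot90 (tcol S i).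
Proof. by rewrite /trow /tcol filter_map. Qed.

Lemma tcol_rot S j : tcol (map rot90 S) j = map rot90 (trow S (- j)).
Proof.
rewrite /trow /tcol filter_map; congr map; apply: eq_filter => p /=.
by rewrite -eqr_oppLR.
Qed.

Lemma trow_tr S u v i : trow (map (tr u v) S) i = map (tr u v) (trow S (i - v)).
Proof.
rewrite /trow filter_map; congr map; apply: eq_filter => p /=.
by apply/eqP/eqP; lia.
Qed.

Lemma tcol_tr S u v i : tcol (map (tr u v) S) i = map (tr u v) (tcol S (i - u)).
Proof.
rewrite /tcol filter_map; congr map; apply: eq_filter => p /=.
by apply/eqP/eqP; lia.
Qed.

Lemma cols_aligned_swp S b f : rows_aligned (map swp S) b f -> cols_aligned S b f.
Proof.
move=> H i; have [H1 H2] := H i; rewrite trow_swp size_map in H1 H2.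
have -> : (column_center S i).2 = (row_center (map swp S) i).1.
  by rewrite /column_center /row_center trow_swp -map_comp.
by split.
Qed.

Lemma rows_aligned_rot S b f : cols_aligned S b f -> rows_aligned (map rot90 S) (- b) (- f).
Proof.
move=> H i; have [H1 H2] := H i; rewrite trow_rot size_map.
have e : size (tcol S i) != 0%N ->
    (row_center (map rot90 S) i).1 = - (column_center S i).2.
  move=> hs; have hne : map snd (tcol S i) != [::] by rewrite -size_eq0 size_map.
  rewrite /column_center /row_center /= trow_rot -map_comp.
  rewrite (map_comp (fun x => - x) snd) seq_min_opp // seq_max_opp //.
  by rewrite -opprD rmorphN /= mulNr addrC.
split=> [ho|ho hp]; first by rewrite e ?H1 ?mulrNz // -lt0n odd_gt0.
by rewrite e ?H2 ?mulrNz ?opprD // -lt0n.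
Qed.

Lemma cols_aligned_rot S a e : rows_aligned S a e -> cols_aligned (map rot90 S) a e.
Proof.
move=> H j; have [H1 H2] := H (- j); rewrite tcol_rot size_map.
have -> : (column_center (map rot90 S) j).2 = (row_center S (- j)).1.
  by rewrite /column_center /row_center /= tcol_rot -map_comp.
by split.
Qed.

Lemma rows_aligned_tr S u v a e : rows_aligned S a e -> rows_aligned (map (tr u v) S) (a + u) e.
Proof.
move=> H i; have [H1 H2] := H (i - v); rewrite trow_tr size_map.
have ee : size (trow S (i - v)) != 0%N ->
    (row_center (map (tr u v) S) i).1 = (row_center S (i - v)).1 + u%:~R.
  move=> hs; have hne : map fst (trow S (i - v)) != [::] by rewrite -size_eq0 size_map.
  have hm : {mono +%R^~ u : x y / x <= y} by move=> x y; rewrite lerD2r.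
  rewrite /row_center /= trow_tr -map_comp.
  have -> : [seq (fst \o tr u v) x | x <- trow S (i - v)] =
    map (+%R^~ u) (map fst (trow S (i - v))) by rewrite -map_comp.
  by rewrite seq_min_mono // seq_max_mono // !rmorphD /=; field.
split=> [ho|ho hp]; first by rewrite ee ?H1 ?intrD // -lt0n odd_gt0.
by rewrite ee ?H2 ?intrD -?lt0n // addrAC.
Qed.

Lemma cols_aligned_tr S u v b f : cols_aligned S b f -> cols_aligned (map (tr u v) S) (b + v) f.
Proof.
move=> H i; have [H1 H2] := H (i - u); rewrite tcol_tr size_map.
have ee : size (tcol S (i - u)) != 0%N ->
    (column_center (map (tr u v) S) i).2 = (column_center S (i - u)).2 + v%:~R.
  move=> hs; have hne : map snd (tcol S (i - u)) != [::] by rewrite -size_eq0 size_map.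
  have hm : {mono +%R^~ v : x y / x <= y} by move=> x y; rewrite lerD2r.
  rewrite /column_center /= tcol_tr -map_comp.
  have -> : [seq (snd \o tr u v) x | x <- tcol S (i - u)] =
    map (+%R^~ v) (map snd (tcol S (i - u))) by rewrite -map_comp.
  by rewrite seq_min_mono // seq_max_mono // !rmorphD /=; field.
split=> [ho|ho hp]; first by rewrite ee ?H1 ?intrD // -lt0n odd_gt0.
by rewrite ee ?H2 ?intrD -?lt0n // addrAC.
Qed.

Lemma optimal_cols_aligned n S : optimal n S ->
  exists b f, (f = 1/2 \/ f = -(1/2)) /\ cols_aligned S b f.
Proof.
move=> /(optimal_map swp_inj l1dist_swp) /optimal_rows_aligned [b [f [hf H]]].
by exists b, f; split=> //; apply: cols_aligned_swp.
Qed.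

Definition centered (S : seq point) (e f : rat) : Prop :=
  exists a b, rows_aligned S a e /\ cols_aligned S b f.

Lemma centered_rot S e f : centered S e f -> centered (map rot90 S) (- f) e.
Proof.
move=> [a [b [hr hc]]]; exists (- b), a.
by split; [apply: rows_aligned_rot | apply: cols_aligned_rot].
Qed.

Lemma centered_normalize S e f : e = 1/2 \/ e = -(1/2) -> f = 1/2 \/ f = -(1/2) ->
  centered S e f -> exists2 k, (k < 4)%N & centered (map (iter k rot90) S) (-(1/2)) (-(1/2)).
Proof.
have rotS k T : map (iter k.+1 rot90) T = map rot90 (map (iter k rot90) T).
  by rewrite -map_comp.
have rot0 T : map (iter 0 rot90) T = T by apply: map_id.
move=> he hf hc; have h1 := centered_rot hc; have h2 := centered_rot h1.
have h3 := centered_rot h2.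
case: he hf hc h1 h2 h3 => -> [] -> hc h1 h2 h3; rewrite ?opprK in h1 h2 h3.
- by exists 2 => //; rewrite !rotS rot0.
- by exists 3 => //; rewrite !rotS rot0.
- by exists 1 => //; rewrite !rotS rot0.
- by exists 0 => //; rewrite rot0.
Qed.

Theorem lemma3 (n : nat) (S : seq point) :
  optimal n S ->
  (exists (a : int) (e : rat), (e = 1/2 \/ e = -(1/2)) /\
     forall i : int,
       (odd (size (trow S i)) -> (row_center S i).1 = a%:~R) /\
       (~~ odd (size (trow S i)) -> (0 < size (trow S i))%N ->
          (row_center S i).1 = a%:~R + e)) /\
  (exists (b : int) (f : rat), (f = 1/2 \/ f = -(1/2)) /\
     forall i : int,
       (odd (size (tcol S i)) -> (column_center S i).2 = b%:~R) /\
       (~~ odd (size (tcol S i)) -> (0 < size (tcol S i))%N ->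
          (column_center S i).2 = b%:~R + f)) /\
  (exists (k : nat) (a b : int),
     let S' := map (rigid k a b) S in
     (k < 4)%N /\ cost S' = cost S /\
     forall i : int,
       (odd (size (trow S' i)) -> (row_center S' i).1 = 0) /\
       (~~ odd (size (trow S' i)) -> (0 < size (trow S' i))%N ->
          (row_center S' i).1 = -(1/2)) /\
       (odd (size (tcol S' i)) -> (column_center S' i).2 = 0) /\
       (~~ odd (size (tcol S' i)) -> (0 < size (tcol S' i))%N ->
          (column_center S' i).2 = -(1/2))).
Proof.
move=> hopt; have [a [e [he hr]]] := optimal_rows_aligned hopt.
have [b [f [hf hc]]] := optimal_cols_aligned hopt.
split; first by exists a, e.
split; first by exists b, f.
have [k hk [a' [b' [hr' hc']]]] :
    exists2 k, (k < 4)%N & centered (map (iter k rot90) S) (-(1/2)) (-(1/2)).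
  by apply: centered_normalize he hf _; exists a, b.
exists k, (- a'), (- b') => S'.
have -> : S' = map (tr (- a') (- b')) (map (iter k rot90) S) by rewrite -map_comp.
split=> //; split; first by rewrite -map_comp cost_map // => s t; apply: l1dist_rigid.
move=> i; have [H1 H2] := rows_aligned_tr (- a') (- b') hr' i.
have [H3 H4] := cols_aligned_tr (- a') (- b') hc' i.
by rewrite addrN mulr0z add0r in H1 H2; rewrite addrN mulr0z add0r in H3 H4.
Qed.
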